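(* Let $k$ be an algebraically closed field of characteristic $0$, $V$ a finite-dimensional $k$-vector space, $h\in\mathrm{End}_k(V)$ such that $0$ is an eigenvalue of $h$ of algebraic multiplicity exactly $1$, $\iota\in V$ and $p\in V^*$. Then it is impossible that $p(h^{n+1}\iota)=\mathrm{tr}_V(h^n)$ for all $n\ge0$.
   Context: Here $h^0=\mathrm{id}_V$, so $\mathrm{tr}_V(h^0)=\dim V$. *)

From mathcomp Require Import all_boot all_order all_algebra.
Set Implicit Arguments. Unset Strict Implicit. Unset Printing Implicit Defensive.

From mathcomp Require Import all_boot all_order all_algebra.
Set Implicit Arguments. Unset Strict Implicit. Unset Printing Implicit Defensive.
Import GRing.Theory.
Local Open Scope ring_scope.

(* Write [char_poly h = g * 'X] with [g.[0] != 0], and let [M := g(h)].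
   Cayley-Hamilton gives [h M = M h = 0], and [M = g.[0] + h Q] then gives
   [M^2 = g.[0] M], so [M / g.[0]] is a nonzero idempotent (the spectral
   projector onto the generalized eigenspaces of the nonzero eigenvalues;
   it fixes the left kernel of [h]).  Its trace is its rank, nonzero in
   characteristic 0.  But linearity turns the hypothesis into
   [tr g(h) = p h g(h) iota = 0]. *)

Lemma mxtrace_idem (F : fieldType) n (E : 'M[F]_n) :
  E *m E = E -> \tr E = (\rank E)%:R.
Proof.
rewrite -{1 2 3 4}(mulmx_base E) mxtrace_mulC => idemE.
suff -> : row_base E *m col_base E = 1%:M by rewrite mxtrace1.
move: (col_base E) (row_base E) (col_base_full E) (row_base_free E) idemE.
move=> C B fullC freeB idemCB.
apply: (row_free_inj freeB); apply: (row_full_inj fullC).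
by rewrite mul1mx !mulmxA -[C *m B *m C *m B]mulmxA idemCB.
Qed.

Lemma mup1_factor (R : fieldType) (c : {poly R}) x :
  c != 0 -> mup x c = 1%N -> exists2 g, c = g * ('X - x%:P) & ~~ root g x.
Proof.
move=> c_neq0 mup1; have [m [g /implyP/(_ c_neq0) gNroot Dc]] := multiplicity_XsubC c x.
exists g => //; suff m1 : m = 1%N by rewrite Dc m1 expr1.
by rewrite -mup1 Dc mupMr // mup_XsubCX eqxx.
Qed.

Lemma mxtrace_horner_mx_moments (R : comNzRingType) n (h : 'M[R]_n.+1)
    (p : 'rV_n.+1) (iota : 'cV_n.+1) :
  (forall k, (p *m h ^+ k.+1 *m iota) 0 0 = \tr (h ^+ k)) ->
  forall q, \tr (horner_mx h q) = (p *m (h *m horner_mx h q) *m iota) 0 0.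
Proof.
move=> moments q; rewrite -[q]coefK poly_def rmorph_sum /=.
rewrite mulmx_sumr mulmx_sumr mulmx_suml summxE raddf_sum /=.
apply: eq_bigr => i _; rewrite linearZ /= rmorphXn /= horner_mx_X.
by rewrite mxtraceZ -moments exprS -[h * _]/(h *m _) -!scalemxAr -scalemxAl [RHS]mxE.
Qed.

Lemma horner_mx_coef0 (R : comNzRingType) n (h : 'M[R]_n.+1) (q : {poly R}) :
  exists Q, horner_mx h q = q.[0]%:M + h *m horner_mx h Q.
Proof.
have : root (q - q.[0]%:P) 0 by rewrite /root !hornerE subrr.
case/factor_theorem => Q; rewrite polyC0 subr0 mulrC => qQ.
exists Q; rewrite {1}(_ : q = q.[0]%:P + 'X * Q); last by rewrite -qQ addrC subrK.
by rewrite rmorphD rmorphM /= horner_mx_C horner_mx_X.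
Qed.

Lemma horner_mx_lker (R : comNzRingType) n (h : 'M[R]_n.+1) (v : 'rV_n.+1) q :
  v *m h = 0 -> v *m horner_mx h q = q.[0] *: v.
Proof.
have [Q ->] := horner_mx_coef0 h q.
by move=> vh0; rewrite mulmxDr mul_mx_scalar mulmxA vh0 mul0mx addr0.
Qed.

Section CharPolyQuotient.

Variables (F : fieldType) (n : nat) (h : 'M[F]_n.+1) (g : {poly F}).
Hypotheses (char_h : char_poly h = g * 'X) (g0_neq0 : g.[0] != 0).

Lemma horner_char_quot_mulmx : horner_mx h g *m h = 0.
Proof.
by have := Cayley_Hamilton h; rewrite char_h rmorphM /= horner_mx_X.
Qed.

Lemma mulmx_horner_char_quot : h *m horner_mx h g = 0.
Proof.
by have := Cayley_Hamilton h; rewrite char_h mulrC rmorphM /= horner_mx_X.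
Qed.

Lemma horner_char_quot_sqr :
  horner_mx h g *m horner_mx h g = g.[0] *: horner_mx h g.
Proof.
have [Q Mdef] := horner_mx_coef0 h g.
by rewrite {2}Mdef mulmxDr mul_mx_scalar mulmxA horner_char_quot_mulmx mul0mx addr0.
Qed.

Lemma horner_char_quot_neq0 : horner_mx h g != 0.
Proof.
have : eigenvalue h 0 by rewrite eigenvalue_root_char char_h rootM rootX eqxx orbT.
case/eigenvalueP => v; rewrite scale0r => /horner_mx_lker vM vN0.
apply: contraNneq vN0 => M0; move: (vM g); rewrite M0 mulmx0.
by move/esym/eqP; rewrite scaler_eq0 (negPf g0_neq0).
Qed.

Lemma mxtrace_horner_char_quot_neq0 :
  [pchar F] =i pred0 -> \tr (horner_mx h g) != 0.
Proof.
move=> /pcharf0P char0.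
set E := g.[0]^-1 *: horner_mx h g.
have idemE : E *m E = E.
  by rewrite -scalemxAl -scalemxAr horner_char_quot_sqr !scalerA divfK.
have : \tr E != 0.
  by rewrite mxtrace_idem // char0 mxrank_eq0 scaler_eq0 invr_eq0 negb_or g0_neq0 horner_char_quot_neq0.
by rewrite mxtraceZ mulf_eq0 negb_or => /andP[].
Qed.

End CharPolyQuotient.

Theorem mainTheorem13 (k : closedFieldType) (char0 : [pchar k] =i pred0)
  (m : nat) (h : 'M[k]_m.+1) (iota : 'cV[k]_m.+1) (p : 'rV[k]_m.+1)
  (hmult : mup 0 (char_poly h) = 1%N) :
  ~ (forall n : nat, (p *m (h ^+ n.+1) *m iota) 0 0 = \tr (h ^+ n)).
Proof.
move=> moments.
have [g] := mup1_factor (monic_neq0 (char_poly_monic h)) hmult.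
rewrite polyC0 subr0 => char_h g0_neq0.
have /negP[] := mxtrace_horner_char_quot_neq0 char_h g0_neq0 char0.
by rewrite (mxtrace_horner_mx_moments moments) mulmx_horner_char_quot // mulmx0 mul0mx mxE.
Qed.
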